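(* Let $(M,\mathbf g,\nabla)$ be a Riemann–Cartan spacetime admitting a spin structure, fix a spin frame determining an orthonormal frame $\{\mathbf e_{\mathbf a}\}$ with dual coframe $\{\theta^{\mathbf a}\}$ and reciprocal coframe $\theta_{\mathbf a}=\eta_{\mathbf{ab}}\theta^{\mathbf b}$. For every $\psi\in\sec\mathcal C\ell^{(0)}(M,\mathtt g)$ and all $\mathbf a,\mathbf b$, $$[\nabla^{(s)}_{\mathbf e_{\mathbf a}},\nabla^{(s)}_{\mathbf e_{\mathbf b}}]\psi=\tfrac12\mathfrak R(\theta_{\mathbf a}\wedge\theta_{\mathbf b})\,\psi-\big(T^{\mathbf c}_{\mathbf{ab}}-\omega^{\mathbf c}_{\mathbf{ab}}+\omega^{\mathbf c}_{\mathbf{ba}}\big)\nabla^{(s)}_{\mathbf e_{\mathbf c}}\psi .$$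
   Context: A Riemann–Cartan spacetime: $4$-dimensional oriented, time-oriented manifold $M$ with Lorentzian metric $\mathbf g$ of signature $(1,3)$ and linear connection $\nabla$ with $\nabla\mathbf g=0$ and nonzero torsion. $\mathcal C\ell(M,\mathtt g)$ is the Clifford bundle of differential forms ($\theta^{\mathbf a}\theta^{\mathbf b}+\theta^{\mathbf b}\theta^{\mathbf a}=2\eta^{\mathbf{ab}}$, $\eta=\mathrm{diag}(1,-1,-1,-1)$), $\mathcal C\ell^{(0)}(M,\mathtt g)$ its even subbundle; $\nabla$ extends to $\mathcal C\ell(M,\mathtt g)$ as a derivation of the Clifford product. Notation: $\nabla_{\mathbf e_{\mathbf a}}\mathbf e_{\mathbf b}=\omega^{\mathbf c}_{\mathbf{ab}}\mathbf e_{\mathbf c}$ (equivalently $\nabla_{\mathbf e_{\mathbf a}}\theta^{\mathbf b}=-\omega^{\mathbf b}_{\mathbf{ac}}\theta^{\mathbf c}$), $[\mathbf e_{\mathbf a},\mathbf e_{\mathbf b}]=c^{\mathbf c}_{\mathbf{ab}}\mathbf e_{\mathbf c}$, torsion $T^{\mathbf c}_{\mathbf{ab}}=\omega^{\mathbf c}_{\mathbf{ab}}-\omega^{\mathbf c}_{\mathbf{ba}}-c^{\mathbf c}_{\mathbf{ab}}$. For a vector field $\mathbf v$, $\omega_{\mathbf v}$ is the $2$-form-valued connection form in the gauge $\{\theta^{\mathbf a}\}$: the section of $\bigwedge^2T^*M$ such that $\nabla_{\mathbf v}A=\partial_{\mathbf v}(A)+\frac12[\omega_{\mathbf v},A]$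 for every Clifford field $A=A^I\theta_I$, where $\partial_{\mathbf v}(A)=\mathbf v(A^I)\theta_I$ (derivative of components in the basis of multiforms $\theta_I$ generated by $\{\theta^{\mathbf a}\}$) and $[\cdot,\cdot]$ is the Clifford commutator. The effective spinorial covariant derivative is $\nabla^{(s)}_{\mathbf v}\psi=\nabla_{\mathbf v}\psi+\frac12\psi\,\omega_{\mathbf v}$. The biform-valued curvature is $\mathfrak R(u\wedge v)=\nabla_{\mathbf u}\omega_{\mathbf v}-\nabla_{\mathbf v}\omega_{\mathbf u}-\frac12[\omega_{\mathbf u},\omega_{\mathbf v}]-\omega_{[\mathbf u,\mathbf v]}$, where $u=\mathbf g(\mathbf u,\cdot)$, $v=\mathbf g(\mathbf v,\cdot)$ (so $\theta_{\mathbf a}$ corresponds to $\mathbf e_{\mathbf a}$) and $\nabla_{\mathbf u}\omega_{\mathbf v}$ is the covariant derivative of the Clifford field $\omega_{\mathbf v}$. *)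

(* Algebraic (frame-level) model of a Riemann-Cartan spacetime
   with a fixed orthonormal frame. *)
From HB Require Import structures.
From mathcomp Require Import all_boot all_order all_algebra.
Set Implicit Arguments. Unset Strict Implicit. Unset Printing Implicit Defensive.
Import Order.TTheory GRing.Theory Num.Theory.
Local Open Scope ring_scope.

Section Clifford.
Variable F : comUnitRingType.  (* stands for the ring C^oo(M) of smooth functions *)

Definition etaM (i : 'I_4) : F := if i == ord0 then 1 else -1.

(* Clifford fields: A = sum_I A^I theta_I, indexed by subsets I of {0,..,3};
   theta_I = theta^{i1} ... theta^{ik} (Clifford product, i1 < ... < ik). *)
Definition Cl := {ffun {set 'I_4} -> F}.

(* theta_S theta_T = bsign S T theta_{S symdiff T} *)
Definition bsign (S T : {set 'I_4}) : F :=
  (-1) ^+ #|[set p : 'I_4 * 'I_4 | [&& p.1 \in S, p.2 \in T & (p.2 < p.1)%N]]|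
  * \prod_(i in S :&: T) etaM i.

Definition symd (S T : {set 'I_4}) := (S :\: T) :|: (T :\: S).

Definition cmul (A B : Cl) : Cl :=
  [ffun U => \sum_(S : {set 'I_4}) \sum_(T : {set 'I_4} | symd S T == U)
               bsign S T * A S * B T].

Definition ccomm (A B : Cl) : Cl := cmul A B - cmul B A.

Definition blade (S : {set 'I_4}) : Cl := [ffun U => (U == S)%:R].
Definition theta (a : 'I_4) : Cl := blade [set a].
Definition theta_low (a : 'I_4) : Cl := [ffun U => etaM a * theta a U].

Definition cscale (f : F) (A : Cl) : Cl := [ffun U => f * A U].

Definition is_kform (k : nat) (A : Cl) := forall S : {set 'I_4}, #|S| != k -> A S = 0.
Definition is_even (A : Cl) := forall S : {set 'I_4}, odd #|S| -> A S = 0.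

(* frame data: d a = derivative along e_a; w c a b = omega^c_{ab};
   cc c a b = c^c_{ab} (structure functions [e_a,e_b] = c^c_{ab} e_c) *)
Variable d : 'I_4 -> F -> F.
Variable w : 'I_4 -> 'I_4 -> 'I_4 -> F.
Variable cc : 'I_4 -> 'I_4 -> 'I_4 -> F.

Definition torsion (c a b : 'I_4) : F := w c a b - w c b a - cc c a b.

Definition dC (a : 'I_4) (A : Cl) : Cl := [ffun U => d a (A U)].

Definition nabla_theta (a b : 'I_4) : Cl := - \sum_(c < 4) cscale (w b a c) (theta c).

(* nabla_{e_a} theta_S, extending nabla as a derivation of the Clifford product *)
Definition nabla_blade (a : 'I_4) (S : {set 'I_4}) : Cl :=
  let s := enum S in
  \sum_(j < size s)
     \big[cmul/blade set0]_(k <- iota 0 (size s))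
        (if k == (j : nat) then nabla_theta a (nth ord0 s k) else theta (nth ord0 s k)).

Definition nablaC (a : 'I_4) (A : Cl) : Cl :=
  dC a A + \sum_(S : {set 'I_4}) cscale (A S) (nabla_blade a S).

Variable Om : 'I_4 -> Cl.

Definition halfF : F := (2%:R)^-1.

Definition nablaS (a : 'I_4) (psi : Cl) : Cl :=
  nablaC a psi + cscale halfF (cmul psi (Om a)).

(* biform-valued curvature R(theta_a /\ theta_b), using
   omega_{[e_a,e_b]} = c^c_{ab} omega_{e_c} *)
Definition curv (a b : 'I_4) : Cl :=
  nablaC a (Om b) - nablaC b (Om a) - cscale halfF (ccomm (Om a) (Om b))
  - \sum_(c < 4) cscale (cc c a b) (Om c).

End Clifford.

(* Thanks to the defining property of the connection form, the right
   multiplications by omega cancel in the spinorial derivative, which becomes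
   nabla^(s)_a psi = d_a psi + 1/2 omega_a psi.  Since d_a is a derivation of the
   Clifford product and the Clifford product is associative, the commutator is
   [d_a, d_b] psi + 1/2 (d_a omega_b - d_b omega_a) psi + 1/4 [omega_a, omega_b] psi.
   The frame bracket gives [d_a, d_b] = c^c_ab d_c, the curvature absorbs the
   middle terms up to -1/2 c^c_ab omega_c psi, and these pieces recombine into
   c^c_ab nabla^(s)_c psi; finally T^c_ab - omega^c_ab + omega^c_ba = -c^c_ab. *)
From HB Require Import structures.
From mathcomp Require Import all_boot all_order all_algebra.
From mathcomp Require Import ring.
Set Implicit Arguments. Unset Strict Implicit. Unset Printing Implicit Defensive.
Import GRing.Theory.
Local Open Scope ring_scope.

Lemma in_symd (S T : {set 'I_4}) i : (i \in symd S T) = (i \in S) (+) (i \in T).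
Proof. by rewrite /symd !inE; case: (i \in S); case: (i \in T). Qed.

Lemma symdA : associative symd.
Proof.
move=> S T W; apply/setP => i.
by rewrite !in_symd; case: (i \in S); case: (i \in T); case: (i \in W).
Qed.

Section CliffordProduct.
Variable F : comUnitRingType.
Implicit Types (A B C : Cl F) (S T W : {set 'I_4}).

Lemma etaM_sqr i : etaM F i * etaM F i = 1.
Proof. by rewrite /etaM; case: ifP => _; rewrite ?mulr1 ?mulrNN ?mulr1. Qed.

Lemma bsign_prod S T : bsign F S T =
  (\prod_(p : 'I_4 * 'I_4) (-1) ^+ [&& p.1 \in S, p.2 \in T & (p.2 < p.1)%N])
  * \prod_(i : 'I_4) (if (i \in S) && (i \in T) then etaM F i else 1).
Proof.
rewrite /bsign prodrXr; congr (_ ^+ _ * _).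
  rewrite cardsE -sum1_card big_mkcond /=; apply: eq_bigr => p _.
  by rewrite unfold_in /=; case: [&& _, _ & _].
by rewrite big_mkcond /=; apply: eq_bigr => i _; rewrite !inE.
Qed.

(* The sign is checked factor by factor: one pair of indices, one index. *)
Lemma bsign_cocycle S T W :
  bsign F S T * bsign F (symd S T) W = bsign F S (symd T W) * bsign F T W.
Proof.
rewrite !bsign_prod mulrACA [RHS]mulrACA -!big_split /=; congr (_ * _).
  apply: eq_bigr => p _; rewrite !in_symd.
  case: (p.1 \in S); case: (p.1 \in T); case: (p.2 \in T); case: (p.2 \in W);
  by case: (p.2 < p.1)%N; rewrite /= ?expr0 ?expr1 ?mulrNN ?mulr1 ?mul1r.
apply: eq_bigr => i _; rewrite !in_symd.
by case: (i \in S); case: (i \in T); case: (i \in W);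
  rewrite /= ?mulr1 ?mul1r ?etaM_sqr // mulrC.
Qed.

Lemma cscaleDr f A B : cscale f (A + B) = cscale f A + cscale f B.
Proof. by apply/ffunP => U; rewrite !ffunE mulrDr. Qed.

Lemma cscaleBr f A B : cscale f (A - B) = cscale f A - cscale f B.
Proof. by apply/ffunP => U; rewrite !ffunE mulrBr. Qed.

Lemma cscaleNl f A : cscale (- f) A = - cscale f A.
Proof. by apply/ffunP => U; rewrite !ffunE mulNr. Qed.

Lemma cscaleAC f g A : cscale f (cscale g A) = cscale g (cscale f A).
Proof. by apply/ffunP => U; rewrite !ffunE mulrCA. Qed.

Lemma cscale0 A : cscale 0 A = 0.
Proof. by apply/ffunP => U; rewrite !ffunE mul0r. Qed.

Lemma cscale_sumr I (r : seq I) (P : pred I) f (A : I -> Cl F) :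
  cscale f (\sum_(i <- r | P i) A i) = \sum_(i <- r | P i) cscale f (A i).
Proof.
apply: (big_morph (cscale f)); first exact: cscaleDr.
by apply/ffunP => U; rewrite !ffunE mulr0.
Qed.

Lemma cmulDl A B C : cmul (A + B) C = cmul A C + cmul B C.
Proof.
apply/ffunP => U; rewrite !ffunE -big_split; apply: eq_bigr => S _.
by rewrite -big_split; apply: eq_bigr => T _; rewrite ffunE mulrDr mulrDl.
Qed.

Lemma cmulDr A B C : cmul A (B + C) = cmul A B + cmul A C.
Proof.
apply/ffunP => U; rewrite !ffunE -big_split; apply: eq_bigr => S _.
by rewrite -big_split; apply: eq_bigr => T _; rewrite ffunE mulrDr.
Qed.

Lemma cmulNl A B : cmul (- A) B = - cmul A B.
Proof.
apply/ffunP => U; rewrite !ffunE -sumrN; apply: eq_bigr => S _.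
by rewrite -sumrN; apply: eq_bigr => T _; rewrite !ffunE mulrN mulNr.
Qed.

Lemma cmul0l B : cmul 0 B = 0.
Proof.
apply/ffunP => U; rewrite !ffunE big1 // => S _; rewrite big1 // => T _.
by rewrite ffunE mulr0 mul0r.
Qed.

Lemma cmul_scalel f A B : cmul (cscale f A) B = cscale f (cmul A B).
Proof.
apply/ffunP => U; rewrite !ffunE mulr_sumr; apply: eq_bigr => S _.
by rewrite mulr_sumr; apply: eq_bigr => T _; rewrite ffunE; ring.
Qed.

Lemma cmul_scaler f A B : cmul A (cscale f B) = cscale f (cmul A B).
Proof.
apply/ffunP => U; rewrite !ffunE mulr_sumr; apply: eq_bigr => S _.
by rewrite mulr_sumr; apply: eq_bigr => T _; rewrite ffunE; ring.
Qed.

Lemma cmul_suml I (r : seq I) (P : pred I) (A : I -> Cl F) B :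
  cmul (\sum_(i <- r | P i) A i) B = \sum_(i <- r | P i) cmul (A i) B.
Proof.
by apply: (big_morph (fun X => cmul X B)); [move=> X Y; exact: cmulDl | exact: cmul0l].
Qed.

Lemma sum_collapse {I : finType} (i0 : I) (p : pred I) (g : F) :
  \sum_(x : I) (if p x then (if i0 == x then g else 0) else 0) = if p i0 then g else 0.
Proof.
rewrite (bigD1 i0) //= eqxx big1 ?addr0 // => x /negbTE nx.
by rewrite eq_sym nx; case: (p x).
Qed.

Lemma cmul_cmullE A B C U :
  cmul (cmul A B) C U = \sum_S \sum_T \sum_W
    (if symd (symd S T) W == U then
       bsign F S T * bsign F (symd S T) W * A S * B T * C W else 0).
Proof.
rewrite ffunE.
transitivity (\sum_X \sum_W \sum_S \sum_T
  (if symd X W == U then (if symd S T == X then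
     bsign F S T * bsign F (symd S T) W * A S * B T * C W else 0) else 0)).
  apply: eq_bigr => X _; rewrite big_mkcond; apply: eq_bigr => W _.
  case: (symd X W == U); last by rewrite big1 // => S _; rewrite big1.
  rewrite ffunE mulr_sumr mulr_suml; apply: eq_bigr => S _.
  rewrite big_mkcond mulr_sumr mulr_suml; apply: eq_bigr => T _.
  by case: (symd S T =P X) => [<-|_]; [ring | rewrite mulr0 mul0r].
rewrite exchange_big.
under eq_bigr => W _ do rewrite exchange_big.
under eq_bigr => W _ do under eq_bigr => S _ do rewrite exchange_big.
rewrite exchange_big; under eq_bigr => S _ do rewrite exchange_big.
apply: eq_bigr => S _; apply: eq_bigr => T _; apply: eq_bigr => W _.
exact: (sum_collapse (symd S T) (fun X => symd X W == U)).
Qed.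

Lemma cmul_cmulrE A B C U :
  cmul A (cmul B C) U = \sum_S \sum_T \sum_W
    (if symd S (symd T W) == U then
       bsign F S (symd T W) * bsign F T W * A S * B T * C W else 0).
Proof.
rewrite ffunE.
transitivity (\sum_S \sum_V \sum_T \sum_W
  (if symd S V == U then (if symd T W == V then
     bsign F S (symd T W) * bsign F T W * A S * B T * C W else 0) else 0)).
  apply: eq_bigr => S _; rewrite big_mkcond; apply: eq_bigr => V _.
  case: (symd S V == U); last by rewrite big1 // => T _; rewrite big1.
  rewrite ffunE mulr_sumr; apply: eq_bigr => T _.
  rewrite big_mkcond mulr_sumr; apply: eq_bigr => W _.
  by case: (symd T W =P V) => [<-|_]; [ring | rewrite mulr0].
apply: eq_bigr => S _; rewrite exchange_big.
under eq_bigr => T _ do rewrite exchange_big.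
apply: eq_bigr => T _; apply: eq_bigr => W _.
exact: (sum_collapse (symd T W) (fun V => symd S V == U)).
Qed.

Lemma cmulA : associative (@cmul F).
Proof.
move=> A B C; apply/ffunP => U; rewrite cmul_cmullE cmul_cmulrE.
apply: eq_bigr => S _; apply: eq_bigr => T _; apply: eq_bigr => W _.
by rewrite symdA bsign_cocycle; case: ifP => // _; ring.
Qed.

End CliffordProduct.

Section Derivation.
Variables (F : comUnitRingType) (D : F -> F).
Hypothesis D_add : forall f g, D (f + g) = D f + D g.
Hypothesis D_mul : forall f g, D (f * g) = D f * g + f * D g.

Lemma derivation0 : D 0 = 0.
Proof. by apply: (addrI (D 0)); rewrite -D_add !addr0. Qed.

Lemma derivation1 : D 1 = 0.
Proof. by apply: (addrI (D 1)); have := D_mul 1 1; rewrite !mulr1 mul1r addr0 => <-. Qed.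

Lemma derivation_sum I (r : seq I) (P : pred I) (f : I -> F) :
  D (\sum_(i <- r | P i) f i) = \sum_(i <- r | P i) D (f i).
Proof. exact: (big_morph D D_add derivation0). Qed.

Lemma derivation_mul_const f g : D f = 0 -> D g = 0 -> D (f * g) = 0.
Proof. by move=> Df Dg; rewrite D_mul Df Dg mul0r mulr0 addr0. Qed.

Lemma derivationN1 : D (-1) = 0.
Proof.
by apply: (addrI (D 1)); rewrite -D_add subrr derivation0 derivation1 addr0.
Qed.

Lemma derivation_etaM i : D (etaM F i) = 0.
Proof. by rewrite /etaM; case: ifP => _; [exact: derivation1 | exact: derivationN1]. Qed.

Lemma derivation_bsign S T : D (bsign F S T) = 0.
Proof.
have Dexp n : D ((-1) ^+ n) = 0.
  elim: n => [|n IH]; first by rewrite expr0 derivation1.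
  by rewrite exprS derivation_mul_const // derivationN1.
rewrite /bsign derivation_mul_const //.
apply: (big_ind (fun x => D x = 0)); [exact: derivation1 | exact: derivation_mul_const |].
by move=> i _; exact: derivation_etaM.
Qed.

Lemma derivation_half : (2%:R : F) \is a GRing.unit -> D (halfF F) = 0.
Proof.
move=> unit2; apply: (mulrI unit2); rewrite mulr0.
have D2 : D 2%:R = 0 by rewrite mulr2n D_add derivation1 addr0.
by move: (D_mul 2%:R (halfF F)); rewrite /halfF mulrV // derivation1 D2 mul0r add0r.
Qed.

End Derivation.

Section FrameDerivative.
Variables (F : comUnitRingType) (d : 'I_4 -> F -> F).
Hypothesis d_add : forall a f g, d a (f + g) = d a f + d a g.
Hypothesis d_mul : forall a f g, d a (f * g) = d a f * g + f * d a g.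
Implicit Types (A B : Cl F).

Lemma dCD a A B : dC d a (A + B) = dC d a A + dC d a B.
Proof. by apply/ffunP => U; rewrite !ffunE d_add. Qed.

Lemma dC_cscale a f A : dC d a (cscale f A) = cscale (d a f) A + cscale f (dC d a A).
Proof. by apply/ffunP => U; rewrite !ffunE d_mul. Qed.

Lemma dC_cmul a A B : dC d a (cmul A B) = cmul (dC d a A) B + cmul A (dC d a B).
Proof.
apply/ffunP => U; rewrite !ffunE (derivation_sum (d_add a)) -big_split; apply: eq_bigr => S _.
rewrite (derivation_sum (d_add a)) -big_split; apply: eq_bigr => T _.
by rewrite 2!d_mul (derivation_bsign (d_add a) (d_mul a)) mul0r add0r !ffunE.
Qed.

Lemma dC_commutator (cc : 'I_4 -> 'I_4 -> 'I_4 -> F) a b :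
  (forall f, d a (d b f) - d b (d a f) = \sum_(c < 4) cc c a b * d c f) ->
  forall A, dC d a (dC d b A) - dC d b (dC d a A) = \sum_(c < 4) cscale (cc c a b) (dC d c A).
Proof.
move=> bracket A; apply/ffunP => U; rewrite !ffunE sum_ffunE bracket.
by apply: eq_bigr => c _; rewrite !ffunE.
Qed.

End FrameDerivative.

Section SpinorialDerivative.
Variables (F : comUnitRingType) (d : 'I_4 -> F -> F).
Variables (w cc : 'I_4 -> 'I_4 -> 'I_4 -> F) (Om : 'I_4 -> Cl F).
Hypothesis unit2 : (2%:R : F) \is a GRing.unit.
Hypothesis d_add : forall a f g, d a (f + g) = d a f + d a g.
Hypothesis d_mul : forall a f g, d a (f * g) = d a f * g + f * d a g.
Hypothesis nablaC_Om : forall a (A : Cl F),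
  nablaC d w a A = dC d a A + cscale (halfF F) (ccomm (Om a) A).
Local Notation h := (halfF F).

Lemma nablaSE a Y : nablaS d w Om a Y = dC d a Y + cscale h (cmul (Om a) Y).
Proof. by rewrite /nablaS nablaC_Om /ccomm cscaleBr -addrA subrK. Qed.

Lemma curvE a b : curv d w cc Om a b =
  dC d a (Om b) - dC d b (Om a) + cscale h (ccomm (Om a) (Om b))
  - \sum_(c < 4) cscale (cc c a b) (Om c).
Proof.
rewrite /curv !nablaC_Om /ccomm.
move: (cmul (Om a) (Om b)) (cmul (Om b) (Om a)) (\sum_(c < 4) _) => P Q R.
by apply/ffunP => U; rewrite !ffunE; ring.
Qed.

Lemma nablaS_commutator a b Y :
  nablaS d w Om a (nablaS d w Om b Y) - nablaS d w Om b (nablaS d w Om a Y) =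
  dC d a (dC d b Y) - dC d b (dC d a Y)
  + cscale h (cmul (dC d a (Om b) - dC d b (Om a)) Y)
  + cscale (h * h) (cmul (ccomm (Om a) (Om b)) Y).
Proof.
have dh e : d e h = 0 by exact: derivation_half.
rewrite !nablaSE !dCD // !dC_cscale // !dC_cmul // !dh !cscale0 !add0r.
rewrite !cmulDr !cmul_scaler /ccomm !cmulDl !cmulNl !cmulA.
move: (dC d a (dC d b Y)) (dC d b (dC d a Y)) => X1 X2.
move: (cmul (Om a) (cmul (Om b) Y)) (cmul (Om b) (cmul (Om a) Y)) => Pab Pba.
move: (cmul (dC d a (Om b)) Y) (cmul (dC d b (Om a)) Y) => Qab Qba.
move: (cmul (Om a) (dC d b Y)) (cmul (Om b) (dC d a Y)) => Rab Rba.
by apply/ffunP => U; rewrite !ffunE; ring.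
Qed.

Lemma sum_cscale_nablaS (k : 'I_4 -> F) Y :
  \sum_(c < 4) cscale (k c) (nablaS d w Om c Y) =
  \sum_(c < 4) cscale (k c) (dC d c Y) + cscale h (cmul (\sum_(c < 4) cscale (k c) (Om c)) Y).
Proof.
under eq_bigr => c _ do rewrite nablaSE cscaleDr cscaleAC -cmul_scalel.
by rewrite big_split cmul_suml cscale_sumr.
Qed.

End SpinorialDerivative.

Theorem mainTheorem7
  (F : comUnitRingType)
  (d : 'I_4 -> F -> F)                    (* e_a acting on functions *)
  (cc w : 'I_4 -> 'I_4 -> 'I_4 -> F)     (* c^c_{ab}, omega^c_{ab} *)
  (Om : 'I_4 -> Cl F)                     (* omega_{e_a} *)
  (H2 : (2%:R : F) \is a GRing.unit)
  (Hadd : forall a f g, d a (f + g) = d a f + d a g)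
  (Hleib : forall a f g, d a (f * g) = d a f * g + f * d a g)
  (Hbr : forall a b f, d a (d b f) - d b (d a f) = \sum_(c < 4) cc c a b * d c f)
  (Hmet : forall a b c, etaM F c * w c a b = - (etaM F b * w b a c))
  (Htors : exists a b c, torsion w cc c a b != 0)
  (HOm2 : forall a, is_kform 2 (Om a))
  (HOm : forall a (A : Cl F),
           nablaC d w a A = dC d a A + cscale (@halfF F) (ccomm (Om a) A)) :
  forall psi : Cl F, is_even psi -> forall a b : 'I_4,
    nablaS d w Om a (nablaS d w Om b psi) - nablaS d w Om b (nablaS d w Om a psi)
    = cscale (@halfF F) (cmul (curv d w cc Om a b) psi)
      - \sum_(c < 4) cscale (torsion w cc c a b - w c a b + w c b a) (nablaS d w Om c psi).
Proof.
move=> psi _ a b.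
have torsion_frame c : torsion w cc c a b - w c a b + w c b a = - cc c a b.
  by rewrite /torsion; ring.
under eq_bigr => c _ do rewrite torsion_frame cscaleNl.
rewrite sumrN opprK (sum_cscale_nablaS HOm).
rewrite (nablaS_commutator H2 Hadd Hleib HOm) (dC_commutator (Hbr a b)) (curvE cc HOm).
move: (\sum_(c < 4) cscale _ (dC d c psi)) (\sum_(c < 4) cscale _ (Om c)) => Sd SOm.
move: (dC d a (Om b)) (dC d b (Om a)) (ccomm (Om a) (Om b)) => P Q K.
rewrite !cmulDl !cmulNl !cmul_scalel.
move: (cmul P psi) (cmul Q psi) (cmul K psi) (cmul SOm psi) => Ppsi Qpsi Kpsi Spsi.
by apply/ffunP => U; rewrite !ffunE; ring.
Qed.
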